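(* Let $R$ be an affine algebra over a field $K$ with no zero divisors which is not amenable. Then there exist a finite-dimensional $K$-subspace $Z\subseteq R$ and $\epsilon>0$ such that for every nonzero finite-dimensional $K$-subspace $V\subseteq R$, $$\frac{\dim_K(VZ+V)}{\dim_K(V)}>1+\epsilon.$$
   Context: An affine algebra is a finitely generated associative algebra over $K$, not necessarily unital. For subspaces $V,Z$, $VZ$ denotes the $K$-span of all products $vz$, $v\in V$, $z\in Z$. $R$ is amenable if there exist finite-dimensional $K$-subspaces $W_1\subseteq W_2\subseteq\cdots$ with $\bigcup_nW_n=R$ such that for every $r\in R$, $\lim_{n\to\infty}\dim_K(W_nr+W_n)/\dim_K(W_n)=1$. *)

From HB Require Import structures.
From mathcomp Require Import all_boot all_order all_algebra.
From Stdlib Require Import ClassicalEpsilon.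
From Stdlib Require Reals.
Notation R := Rdefinitions.R.
Notation Rlt := Rdefinitions.Rlt.
Notation R0 := Rdefinitions.R0.
Notation R1 := Rdefinitions.R1.
Notation Rplus := Rdefinitions.Rplus.
Notation Rminus := Rdefinitions.Rminus.
Notation Rdiv := Rdefinitions.Rdiv.
Notation Rabs := Rbasic_fun.Rabs.
Notation INR := Raxioms.INR.
Set Implicit Arguments. Unset Strict Implicit. Unset Printing Implicit Defensive.
Import GRing.Theory.
Local Open Scope ring_scope.

Section Defs.
Variables (K : fieldType) (A : lmodType K) (mul : A -> A -> A).

Definition is_assoc_algebra : Prop :=
  [/\ (forall x y z, mul x (mul y z) = mul (mul x y) z),
      (forall x y z, mul (x + y) z = mul x z + mul y z),
      (forall x y z, mul x (y + z) = mul x y + mul x z)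
    & (forall (a : K) x y, mul (a *: x) y = a *: mul x y /\ mul x (a *: y) = a *: mul x y)].

Definition is_subspace (S : A -> Prop) : Prop :=
  [/\ S 0, (forall x y, S x -> S y -> S (x + y)) & (forall (a : K) x, S x -> S (a *: x))].

Definition is_subalgebra (S : A -> Prop) : Prop :=
  is_subspace S /\ (forall x y, S x -> S y -> S (mul x y)).

Definition affine_algebra : Prop :=
  is_assoc_algebra /\
  exists gens : seq A, forall S, is_subalgebra S ->
    (forall g, g \in gens -> S g) -> forall x, S x.

Definition no_zero_divisors : Prop :=
  forall x y, mul x y = 0 -> x = 0 \/ y = 0.

Definition lincomb (s : seq A) (c : seq K) : A := \sum_(i < size s) c`_i *: s`_i.

Definition free_seq (s : seq A) : Prop :=
  forall c : seq K, lincomb s c = 0 -> forall i, (i < size s)%N -> c`_i = 0.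

Definition spans (s : seq A) (S : A -> Prop) : Prop :=
  forall x, S x <-> exists c : seq K, x = lincomb s c.

Definition has_dim (S : A -> Prop) (n : nat) : Prop :=
  exists s : seq A, [/\ size s = n, free_seq s & spans s S].

Definition fin_dim (S : A -> Prop) : Prop := exists n, has_dim S n.

(* dim_K S (meaningful for finite-dimensional S; dimension is unique) *)
Definition dimK (S : A -> Prop) : nat :=
  epsilon (inhabits 0%N) (has_dim S).

Definition prod_space (V Z : A -> Prop) : A -> Prop :=
  fun x => exists s : seq (A * A),
    (forall p, p \in s -> V p.1 /\ Z p.2) /\ x = \sum_(p <- s) mul p.1 p.2.

Definition sum_space (V W : A -> Prop) : A -> Prop :=
  fun x => exists v w, [/\ V v, W w & x = v + w].

Definition rmul_space (W : A -> Prop) (r : A) : A -> Prop :=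
  fun x => exists w, W w /\ x = mul w r.

Definition dim_ratio (X Y : A -> Prop) : R :=
  Rdiv (INR (dimK X)) (INR (dimK Y)).

Definition amenable : Prop :=
  exists W : nat -> (A -> Prop),
    [/\ (forall n, fin_dim (W n)),
        (forall n x, W n x -> W n.+1 x),
        (forall x, exists n, W n x)
      & (forall r : A, forall e : R, Rlt R0 e -> exists N : nat, forall n : nat,
           (N <= n)%N ->
           Rlt (Rabs (Rminus (dim_ratio (sum_space (rmul_space (W n) r) (W n)) (W n)) R1)) e)].

End Defs.

(* Suppose R is not uniformly expanding. Then for every finite-dimensional Z
   and every n there is a nonzero finite-dimensional V with
   dim (VZ + V) <= (1 + 1/(n+1)) dim V (a Folner subspace). If R is
   finite-dimensional, the constant sequence W_n = R witnesses amenability.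
   Otherwise R contains free families D of any size, and since R has no zero
   divisors v0 D is free inside VZ for any nonzero v0 in V; so Folner
   subspaces can be chosen of arbitrarily large dimension. Let C_m be the span
   of the monomials of length at most m in the generators and put
   W_(m+1) = V_m + C_m + W_m, where V_m is a Folner subspace for C_m with
   dim V_m much larger than dim (C_m + W_m). Then (W_n) increases, exhausts R,
   and for r in C_N and m >= N the part C_m + W_m is negligible, so
   dim (W_(m+1) r + W_(m+1)) <= (1 + 2/(m+1)) dim W_(m+1). *)

From HB Require Import structures.
From mathcomp Require Import all_boot all_order all_algebra zify.
From Stdlib Require Import ClassicalEpsilon Classical FunctionalExtensionality PropExtensionality.
From Stdlib Require Import Reals Lra Lia.
Set Implicit Arguments. Unset Strict Implicit. Unset Printing Implicit Defensive.
Import GRing.Theory.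
Local Open Scope ring_scope.

Lemma pred_ext (T : Type) (P Q : T -> Prop) : (forall x, P x <-> Q x) -> P = Q.
Proof.
by move=> PQ; apply: functional_extensionality => x; apply: propositional_extensionality.
Qed.

Section LinearSpan.
Variables (K : fieldType) (A : lmodType K).
Implicit Types (s t : seq A) (x y : A) (c : seq K) (S : A -> Prop).

Definition lspan s x : Prop := exists c, x = lincomb s c.

Lemma spans_lspan s S : spans s S -> S = lspan s.
Proof. exact: pred_ext. Qed.

Lemma lincomb_nil c : lincomb ([::] : seq A) c = 0.
Proof. by rewrite /lincomb big_ord0. Qed.

Lemma lincomb0 s : lincomb s [::] = 0.
Proof. by rewrite /lincomb big1 // => i _; rewrite nth_nil scale0r. Qed.

Lemma lincomb_cons y s c : lincomb (y :: s) c = c`_0 *: y + lincomb s (behead c).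
Proof.
rewrite /lincomb big_ord_recl; congr (_ + _).
by apply: eq_bigr => i _; rewrite nth_behead.
Qed.

Lemma lspan_nil x : lspan [::] x <-> x = 0.
Proof. by split=> [[c ->]|->]; [rewrite lincomb_nil | exists [::]; rewrite lincomb_nil]. Qed.

Lemma lspan_cons y s x :
  lspan (y :: s) x <-> exists a x', lspan s x' /\ x = a *: y + x'.
Proof.
split=> [[c ->]|[a [x' [[c ->] ->]]]].
  by exists c`_0, (lincomb s (behead c)); rewrite lincomb_cons; split; first exists (behead c).
by exists (a :: c); rewrite lincomb_cons.
Qed.

Lemma lspan_subspace s : is_subspace (lspan s).
Proof.
elim: s => [|y s [IH0 IHD IHZ]].
  split=> [|x x'|a x]; rewrite ?lspan_nil //; first by move=> -> ->; rewrite addr0.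
  by move=> ->; rewrite scaler0.
split.
- by apply/lspan_cons; exists 0, 0; rewrite scale0r addr0.
- move=> x x' /lspan_cons[a [u [Hu ->]]] /lspan_cons[b [u' [Hu' ->]]].
  by apply/lspan_cons; exists (a + b), (u + u'); rewrite scalerDl addrACA; split; first exact: IHD.
- move=> a x /lspan_cons[b [u [Hu ->]]].
  by apply/lspan_cons; exists (a * b), (a *: u); rewrite scalerDr scalerA; split; first exact: IHZ.
Qed.

Lemma lspan0 s : lspan s 0.
Proof. by case: (lspan_subspace s). Qed.

Lemma lspanD s x y : lspan s x -> lspan s y -> lspan s (x + y).
Proof. by case: (lspan_subspace s) => _ + _; apply. Qed.

Lemma lspanZ s a x : lspan s x -> lspan s (a *: x).
Proof. by case: (lspan_subspace s) => _ _; apply. Qed.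

Lemma lspan_mem s x : x \in s -> lspan s x.
Proof.
elim: s => [|y s IH] //; rewrite inE => /orP[/eqP->|/IH Hx]; apply/lspan_cons.
  by exists 1, 0; rewrite scale1r addr0; split; first exact: lspan0.
by exists 0, x; rewrite scale0r add0r.
Qed.

Lemma lspan_min S s : is_subspace S -> (forall x, x \in s -> S x) ->
  forall x, lspan s x -> S x.
Proof.
move=> [S0 SD SZ]; elim: s => [|y s IH] Hs x; first by move=> /lspan_nil ->.
move=> /lspan_cons[a [x' [Hx' ->]]]; apply: SD; first by apply/SZ/Hs/mem_head.
by apply: IH => // z Hz; apply: Hs; rewrite inE Hz orbT.
Qed.

Lemma lspan_subset s t :
  (forall x, x \in s -> lspan t x) -> forall x, lspan s x -> lspan t x.
Proof. exact: lspan_min (lspan_subspace t). Qed.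

Lemma lspan_catl s t x : lspan s x -> lspan (s ++ t) x.
Proof. by apply: lspan_subset => y Hy; apply: lspan_mem; rewrite mem_cat Hy. Qed.

Lemma lspan_catr s t x : lspan t x -> lspan (s ++ t) x.
Proof. by apply: lspan_subset => y Hy; apply: lspan_mem; rewrite mem_cat Hy orbT. Qed.

Lemma sum_space_subspace (V W : A -> Prop) :
  is_subspace V -> is_subspace W -> is_subspace (sum_space V W).
Proof.
move=> [V0 VD VZ] [W0 WD WZ]; split.
- by exists 0, 0; rewrite addr0.
- move=> _ _ [v [w [Vv Ww ->]]] [v' [w' [Vv' Ww' ->]]].
  by exists (v + v'), (w + w'); rewrite addrACA; split; [apply: VD | apply: WD |].
- move=> a _ [v [w [Vv Ww ->]]].
  by exists (a *: v), (a *: w); rewrite scalerDr; split; [apply: VZ | apply: WZ |].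
Qed.

Lemma lspan_cat s t : lspan (s ++ t) = sum_space (lspan s) (lspan t).
Proof.
apply: pred_ext => x; split.
  apply: lspan_min x; first by apply: sum_space_subspace; apply: lspan_subspace.
  move=> y; rewrite mem_cat => /orP[Hy|Hy].
    by exists y, 0; rewrite addr0; split; [apply: lspan_mem | apply: lspan0 |].
  by exists 0, y; rewrite add0r; split; [apply: lspan0 | apply: lspan_mem |].
by move=> [y [z [Hy Hz ->]]]; apply: lspanD; [apply: lspan_catl | apply: lspan_catr].
Qed.

Section LinearMap.
Variable f : A -> A.
Hypotheses (fD : {morph f : x y / x + y}) (fZ : scalable f).

Lemma linear_map0 : f 0 = 0.
Proof. by rewrite -(scale0r (0 : A)) fZ !scale0r. Qed.

Lemma lincomb_map s c : f (lincomb s c) = lincomb (map f s) c.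
Proof.
elim: s c => [|y s IH] c; first by rewrite !lincomb_nil linear_map0.
by rewrite /= !lincomb_cons fD fZ IH.
Qed.

Lemma lspan_map s : lspan (map f s) = fun x => exists2 y, lspan s y & x = f y.
Proof.
apply: pred_ext => x; split=> [[c ->]|[_ [c ->] ->]]; last by exists c; rewrite lincomb_map.
by exists (lincomb s c); [exists c | rewrite lincomb_map].
Qed.

Lemma free_seq_map s : (forall x, f x = 0 -> x = 0) -> free_seq s -> free_seq (map f s).
Proof.
move=> f_inj Hs c; rewrite -lincomb_map => /f_inj Hc i.
by rewrite size_map; apply: Hs.
Qed.

End LinearMap.
End LinearSpan.

Section Dimension.
Variables (K : fieldType) (A : lmodType K).
Implicit Types (s t b : seq A) (x : A).

Lemma free_seq_cons x s : free_seq s -> ~ lspan s x -> free_seq (x :: s).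
Proof.
move=> Hs Hx c; rewrite lincomb_cons => Hc.
have [c0|nz] := eqVneq c`_0 0; last first.
  case: Hx; have -> : x = - (c`_0)^-1 *: lincomb s (behead c).
    by rewrite -(addr0_eq Hc) scaleNr scalerN opprK scalerK.
  by apply: lspanZ; exists (behead c).
move=> [|i] Hi //; rewrite -nth_behead; apply: (Hs (behead c)) => //.
by move: Hc; rewrite c0 scale0r add0r.
Qed.

Lemma free_seq_head_neq0 x s : free_seq (x :: s) -> x <> 0.
Proof.
move=> Hxs x0; have := Hxs [:: 1].
by rewrite lincomb_cons x0 scaler0 add0r lincomb0 => /(_ erefl 0%nat isT) /eqP; rewrite oner_eq0.
Qed.

Lemma free_seq_leq_size s t :
  free_seq t -> (forall x, x \in t -> lspan s x) -> (size t <= size s)%nat.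
Proof.
move=> Ht Hts.
have /fin_all_exists[coef Hcoef] :
    forall j : 'I_(size t), exists c, t`_j = lincomb s c.
  by move=> j; apply/Hts/mem_nth.
pose M := \matrix_(j < size t, i < size s) (coef j)`_i.
suff /eqP <- : row_free M by apply: rank_leq_col.
rewrite -kermx_eq0; apply/eqP/row_matrixP => k; rewrite row0.
set x := row k (kermx M).
have xM0 : x *m M = 0 by apply/sub_kermxP; apply: row_sub.
have : lincomb t [seq x 0 j | j <- enum 'I_(size t)] = 0.
  transitivity (\sum_(i < size s) (x *m M) 0 i *: s`_i); last first.
    by rewrite xM0 big1 // => i _; rewrite mxE scale0r.
  rewrite /lincomb (eq_bigr (fun j : 'I_(size t) => x 0 j *: lincomb s (coef j))); last first.
    by move=> j _; rewrite (nth_map j) ?size_enum_ord // nth_ord_enum Hcoef.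
  under eq_bigr do rewrite scaler_sumr.
  rewrite exchange_big; apply: eq_bigr => i _; rewrite mxE scaler_suml.
  by under [RHS]eq_bigr => j _ do rewrite [M j i]mxE -scalerA.
move=> /Ht x0; apply/rowP => j; rewrite [RHS]mxE -(x0 j (ltn_ord j)).
by rewrite (nth_map j) ?size_enum_ord // nth_ord_enum.
Qed.

Lemma free_seq_basis s : exists2 b, free_seq b & lspan b = lspan s.
Proof.
elim: s => [|y s [b Hb Ebs]]; first by exists [::].
have [Hy|Hy] := classic (lspan b y).
  exists b => //; apply: pred_ext => x; rewrite lspan_cons -Ebs.
  split=> [Hx|[a [x' [Hx' ->]]]]; last by apply: lspanD => //; apply: lspanZ.
  by exists 0, x; rewrite scale0r add0r.
exists (y :: b); first exact: free_seq_cons.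
by apply: pred_ext => x; rewrite !lspan_cons Ebs.
Qed.

Lemma dimK_eq (S : A -> Prop) n : has_dim S n -> dimK S = n.
Proof.
move=> HS; have /(epsilon_spec (inhabits 0%nat)) : exists n, has_dim S n by exists n.
rewrite -/(dimK S); move: HS => [s [<- Hs /spans_lspan ->]] [t [<- Ht /spans_lspan Est]].
apply/eqP; rewrite eqn_leq; apply/andP; split; apply: free_seq_leq_size => // x /lspan_mem.
  by rewrite Est.
by rewrite -Est.
Qed.

Definition rk s : nat := dimK (lspan s).

Lemma rk_free s : free_seq s -> rk s = size s.
Proof. by move=> Hs; apply: dimK_eq; exists s. Qed.

Lemma rk_basis s : exists2 b, free_seq b & lspan b = lspan s /\ rk s = size b.
Proof. by have [b Hb Ebs] := free_seq_basis s; exists b => //; rewrite -rk_free // /rk Ebs. Qed.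

Lemma fin_dim_lspan s : fin_dim (lspan s).
Proof. by have [b Hb [Ebs _]] := rk_basis s; exists (size b), b; rewrite -Ebs. Qed.

Lemma rk_le s t : (forall x, x \in s -> lspan t x) -> (rk s <= rk t)%nat.
Proof.
move=> Hst; have [bs Hbs [Es ->]] := rk_basis s; have [bt Hbt [Et ->]] := rk_basis t.
apply: free_seq_leq_size => // x /lspan_mem; rewrite Es Et; exact: lspan_subset.
Qed.

Lemma rk_size s : (rk s <= size s)%nat.
Proof.
have [b Hb [Eb ->]] := rk_basis s.
by apply: free_seq_leq_size => // x /lspan_mem; rewrite Eb.
Qed.

Lemma rk_cat s t : (rk (s ++ t) <= rk s + rk t)%nat.
Proof.
have [bs Hbs [Es ->]] := rk_basis s; have [bt Hbt [Et ->]] := rk_basis t.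
rewrite -size_cat; apply: leq_trans (rk_size _); apply: rk_le => x.
rewrite mem_cat => /orP[|] /lspan_mem; rewrite -?Es -?Et.
  exact: lspan_catl.
exact: lspan_catr.
Qed.

End Dimension.

Section Bilinear.
Variables (K : fieldType) (A : lmodType K) (mul : A -> A -> A).
Hypothesis mulDl : forall x y z, mul (x + y) z = mul x z + mul y z.
Hypothesis mulDr : forall x y z, mul x (y + z) = mul x y + mul x z.
Hypothesis mulZl : forall (a : K) x y, mul (a *: x) y = a *: mul x y.
Hypothesis mulZr : forall (a : K) x y, mul x (a *: y) = a *: mul x y.
Implicit Types (s v w z : seq A).

Let lspan_mulr a z y : lspan z y -> lspan (map (mul a) z) (mul a y).
Proof. by rewrite (lspan_map (mulDr a) (mulZr^~ a)) => Hy; exists y. Qed.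

Let lspan_mull v r x : lspan v x -> lspan (map (mul^~ r) v) (mul x r).
Proof.
by rewrite (lspan_map (fun x y => mulDl x y r) (fun a x => mulZl a x r)) => Hx; exists x.
Qed.

Lemma lspan_mul v z x y :
  lspan v x -> lspan z y -> lspan (allpairs mul v z) (mul x y).
Proof.
move=> /(lspan_mull y) Hx /lspan_mulr Hy; apply: lspan_subset Hx => _ /mapP[a Ha ->].
by apply: lspan_subset (Hy a) => _ /mapP[b Hb ->]; apply/lspan_mem/allpairs_f.
Qed.

Lemma prod_space_subspace (V Z : A -> Prop) :
  is_subspace V -> is_subspace (prod_space mul V Z).
Proof.
move=> [_ _ VZ]; split.
- by exists [::]; rewrite big_nil.
- move=> _ _ [s [Hs ->]] [s' [Hs' ->]]; exists (s ++ s'); rewrite big_cat.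
  by split=> // p; rewrite mem_cat => /orP[/Hs|/Hs'].
- move=> a _ [s [Hs ->]]; exists [seq (a *: p.1, p.2) | p <- s].
  rewrite big_map scaler_sumr; split; last by apply: eq_bigr => p _; rewrite mulZl.
  by move=> _ /mapP[p /Hs[Hp1 Hp2] ->]; split=> //; apply: VZ.
Qed.

Lemma prod_space_lspan v z : prod_space mul (lspan v) (lspan z) = lspan (allpairs mul v z).
Proof.
apply: pred_ext => x; split.
  move=> [s [Hs ->]]; rewrite big_seq; apply: big_ind => [|y y'|p /Hs[]].
  - exact: lspan0.
  - exact: lspanD.
  - exact: lspan_mul.
apply: lspan_min x; first by apply/prod_space_subspace/lspan_subspace.
move=> _ /allpairsP[[a b] [/= Ha Hb ->]]; exists [:: (a, b)]; rewrite big_seq1.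
by split=> // p; rewrite inE => /eqP ->; split; apply: lspan_mem.
Qed.

Lemma rmul_space_lspan w r : rmul_space mul (lspan w) r = lspan (map (mul^~ r) w).
Proof.
rewrite (lspan_map (fun x y => mulDl x y r) (fun a x => mulZl a x r)).
by apply: pred_ext => x; split=> [[y [Hy ->]]|[y Hy ->]]; exists y.
Qed.

Section Monomials.
Hypothesis mulA : forall x y z : A, mul x (mul y z) = mul (mul x y) z.
Variable g : seq A.

Fixpoint monomials n : seq A :=
  if n is n'.+1 then g ++ allpairs mul (monomials n') g else [::].

Lemma monomials_le n m : (n <= m)%nat -> forall x, x \in monomials n -> x \in monomials m.
Proof.
elim: m n => [|m IH] [|n] //= Hnm x.
rewrite !mem_cat => /orP[->//|/allpairsP[[a b] [/= Ha Hb ->]]].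
by rewrite allpairs_f ?orbT // (IH n).
Qed.

Lemma lspan_monomials_le n m x :
  (n <= m)%nat -> lspan (monomials n) x -> lspan (monomials m) x.
Proof. by move=> Hnm; apply: lspan_subset => y /(monomials_le Hnm); apply: lspan_mem. Qed.

Lemma lspan_monomials_mulg n x b :
  b \in g -> lspan (monomials n) x -> lspan (monomials n.+1) (mul x b).
Proof.
move=> Hb /lspan_mul /(_ (lspan_mem Hb)); apply: lspan_subset => y Hy.
by apply: lspan_mem; rewrite mem_cat Hy orbT.
Qed.

Lemma lspan_monomials_mul n m x y :
  lspan (monomials n) x -> lspan (monomials m) y -> lspan (monomials (n + m)) (mul x y).
Proof.
move=> Hx /(lspan_mul Hx); apply: lspan_subset => _ /allpairsP[[a b] [/= Ha Hb ->]].
elim: m b Hb => [|m IH] // b; rewrite mem_cat => /orP[Hb|/allpairsP[[b' c] [/= Hb' Hc ->]]].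
  apply: (@lspan_monomials_le n.+1); first by rewrite addnS ltnS leq_addr.
  exact/lspan_monomials_mulg/lspan_mem.
by rewrite mulA addnS; apply/lspan_monomials_mulg/IH.
Qed.

Lemma lspan_monomials_exhaust :
  (forall S, is_subalgebra mul S -> (forall x, x \in g -> S x) -> forall x, S x) ->
  forall x, exists n, lspan (monomials n) x.
Proof.
apply; last by move=> x Hx; exists 1%nat; apply: lspan_mem; rewrite mem_cat Hx.
split; first split.
- by exists 0%nat; apply: lspan0.
- move=> x y [n Hx] [m Hy]; exists (n + m)%nat; apply: lspanD.
    by apply: lspan_monomials_le Hx; rewrite leq_addr.
  by apply: lspan_monomials_le Hy; rewrite leq_addl.
- by move=> a x [n Hx]; exists n; apply: lspanZ.
by move=> x y [n Hx] [m Hy]; exists (n + m)%nat; apply: lspan_monomials_mul.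
Qed.

End Monomials.
End Bilinear.

Section RatioBounds.
Local Open Scope R_scope.

Lemma INR_Sn_gt0 n : 0 < INR n.+1.
Proof. exact/lt_0_INR/ltP. Qed.

Lemma ratio_gt (n a b : nat) :
  (0 < b)%nat -> (n.+2 * b < n.+1 * a)%nat -> 1 + 1 / INR n.+1 < INR a / INR b.
Proof.
move=> /ltP/lt_0_INR Hb /ltP/lt_INR; rewrite !mult_INR (S_INR n.+1).
have Hn := INR_Sn_gt0 n; move: (INR n.+1) (INR a) (INR b) Hn Hb => k x y Hk Hy H.
have Hq : x = x / y * y by field; lra.
have Hp : k * (1 / k) = 1 by field; lra.
move: (x / y) (1 / k) Hq Hp => q p Hq Hp.
have : k + 1 < k * q by rewrite Hq in H; nra.
nra.
Qed.

Lemma ratio_near1 (m a b : nat) (e : R) :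
  (0 < b)%nat -> (b <= a)%nat -> (m.+1 * a <= m.+3 * b)%nat -> 2 / INR m.+1 < e ->
  Rabs (INR a / INR b - 1) < e.
Proof.
move=> /ltP/lt_0_INR Hy /leP/le_INR Hxy /leP/le_INR; rewrite !mult_INR !S_INR => H He.
have Hk := INR_Sn_gt0 m; rewrite S_INR in Hk He.
move: (INR m + 1) (INR a) (INR b) Hk Hy Hxy H He => k x y Hk Hy Hxy H He.
have Hq : x = x / y * y by field; lra.
have Hp : k * (2 / k) = 2 by field; lra.
move: (x / y) (2 / k) Hq Hp He => q p Hq Hp He; rewrite Hq in Hxy H.
have Hq1 : 1 <= q by nra.
have Hkq : k * q <= k + 2 by nra.
rewrite Rabs_pos_eq; nra.
Qed.

Lemma eventually_two_div_lt (e : R) : 0 < e -> exists N, forall m, (N <= m)%nat -> 2 / INR m.+1 < e.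
Proof.
move=> He; have [N [HN HN0]] := archimed_cor1 (e / 2) ltac:(lra).
exists N => m HNm; have HNpos : 0 < INR N by apply: lt_0_INR.
have : / INR m.+1 <= / INR N.
  by apply: Rinv_le_contravar => //; apply: le_INR; apply/leP/leqW.
rewrite /Rdiv; lra.
Qed.

End RatioBounds.

Section Amenability.
Variables (K : fieldType) (A : lmodType K) (mul : A -> A -> A).
Hypothesis mulDl : forall x y z, mul (x + y) z = mul x z + mul y z.
Hypothesis mulDr : forall x y z, mul x (y + z) = mul x y + mul x z.
Hypothesis mulZl : forall (a : K) x y, mul (a *: x) y = a *: mul x y.
Hypothesis mulZr : forall (a : K) x y, mul x (a *: y) = a *: mul x y.
Implicit Types (d s u v w z : seq A).

Definition uniformly_expanding : Prop :=
  exists Z : A -> Prop, fin_dim Z /\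
  exists eps : R, Rlt R0 eps /\
    forall V : A -> Prop, fin_dim V -> (exists x, V x /\ x <> 0) ->
      Rlt (Rplus R1 eps) (dim_ratio (sum_space (prod_space mul V Z) V) V).

Definition folner_condition : Prop := forall z (n : nat), exists v,
  [/\ free_seq v, (0 < size v)%nat & (n.+1 * rk (allpairs mul v z ++ v) <= n.+2 * size v)%nat].

Lemma folner_condition_of_not_expanding : ~ uniformly_expanding -> folner_condition.
Proof.
move=> Hexpand z n; apply: NNPP => Hno; apply: Hexpand.
exists (lspan z); split; first exact: fin_dim_lspan.
exists (Rdiv R1 (INR n.+1)); split; first exact/Rdiv_lt_0_compat/INR_Sn_gt0/Rlt_0_1.
move=> V [m [v [_ Hv /spans_lspan ->]]] [x [Vx nx]].
have Hv0 : (0 < size v)%nat by case: v {Hv} Vx => // /lspan_nil.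
rewrite /dim_ratio prod_space_lspan // -lspan_cat -/(rk _) -/(rk v) (rk_free Hv).
apply: ratio_gt => //; rewrite ltnNge; apply/negP => Hle; apply: Hno; by exists v.
Qed.

Lemma amenable_of_rk_bounds (W : nat -> seq A) :
  (forall m x, lspan (W m) x -> lspan (W m.+1) x) ->
  (forall x, exists m, lspan (W m) x) ->
  (forall r, exists N, forall m, (N <= m)%nat ->
     (0 < rk (W m))%nat /\ (m * rk (map (mul^~ r) (W m) ++ W m) <= m.+2 * rk (W m))%nat) ->
  amenable mul.
Proof.
move=> Wmono Wexh Wbound; exists (fun m => lspan (W m)); split=> //.
  by move=> m; apply: fin_dim_lspan.
move=> r e He; have [N HN] := Wbound r; have [N' HN'] := eventually_two_div_lt He.
exists (N + N').+1 => -[//|m] Hm; have [Hpos Hle] := HN m.+1 ltac:(lia).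
rewrite /dim_ratio rmul_space_lspan // -lspan_cat.
apply: ratio_near1 Hpos _ Hle (HN' m ltac:(lia)).
by apply: rk_le => x Hx; apply/lspan_catr/lspan_mem.
Qed.

Lemma free_unbounded_or_spanning :
  (forall k, exists2 d : seq A, free_seq d & size d = k) \/ exists d, forall x, lspan d x.
Proof.
have [|Hno] := classic (exists d, forall x, lspan d x); [by right | left].
elim=> [|k [d Hd <-]]; first by exists [::].
have [x Hx] : exists x, ~ lspan d x by apply: not_all_ex_not => Hall; apply: Hno; exists d.
by exists (x :: d); first exact: free_seq_cons.
Qed.

Lemma amenable_of_spanning d : folner_condition -> (forall x, lspan d x) -> amenable mul.
Proof.
move=> Hf Hd; apply: (@amenable_of_rk_bounds (fun=> d)) => // [x|r]; first by exists 0%nat.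
have [v [Hv Hv0 _]] := Hf [::] 0%nat.
have Hrk : rk (map (mul^~ r) d ++ d) = rk d.
  apply/eqP; rewrite eqn_leq; apply/andP; split; apply: rk_le => x Hx; first exact: Hd.
  exact/lspan_catr/lspan_mem.
have Hpos : (0 < rk d)%nat.
  by rewrite -(rk_free Hv) in Hv0; apply: leq_trans Hv0 _; apply: rk_le => x _.
by exists 0%nat => m _; rewrite Hrk; split=> //; lia.
Qed.

Lemma folner_extension_bound (m : nat) r z u v :
  lspan z r -> free_seq v -> (2 * m.+1 * (size u).+1 <= size v)%nat ->
  (m.+1 * rk (allpairs mul v z ++ v) <= m.+2 * size v)%nat ->
  (0 < rk (v ++ u))%nat /\
  (m.+1 * rk (map (mul^~ r) (v ++ u) ++ v ++ u) <= m.+3 * rk (v ++ u))%nat.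
Proof.
move=> Hr Hv Hsize Hle.
have Hvu : (size v <= rk (v ++ u))%nat.
  by rewrite -(rk_free Hv); apply: rk_le => x Hx; apply/lspan_catl/lspan_mem.
have Hsplit : (rk (map (mul^~ r) (v ++ u) ++ v ++ u) <=
               rk ((allpairs mul v z ++ v) ++ (map (mul^~ r) u ++ u)))%nat.
  apply: rk_le => x; rewrite map_cat !mem_cat -!orbA => /or4P[Hx|Hx|Hx|Hx].
  - case/mapP: Hx => y Hy ->; apply/lspan_catl/lspan_catl.
    exact: (lspan_mul mulDl mulDr mulZl mulZr (lspan_mem Hy) Hr).
  - by apply/lspan_catr/lspan_mem; rewrite mem_cat Hx.
  - by apply/lspan_catl/lspan_catr/lspan_mem.
  - by apply/lspan_catr/lspan_catr/lspan_mem.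
have Hcat := rk_cat (allpairs mul v z ++ v) (map (mul^~ r) u ++ u).
have Hu := rk_size (map (mul^~ r) u ++ u); rewrite size_cat size_map in Hu.
split; nia.
Qed.

Hypothesis Hnzd : no_zero_divisors mul.

(* v0 d lies free inside v (z ++ d), so the Folner inequality forces
   size v >= size d / 2. *)
Lemma folner_condition_large :
  folner_condition -> (forall k, exists2 d : seq A, free_seq d & size d = k) ->
  forall z (n k : nat), exists v, [/\ free_seq v, (k <= size v)%nat &
    (n.+1 * rk (allpairs mul v z ++ v) <= n.+2 * size v)%nat].
Proof.
move=> Hf Hfree z n k; have [d Hd Hsd] := Hfree (2 * k)%nat.
have [[|v0 v] [Hv // _ Hle]] := Hf (z ++ d) n.
have v0_neq0 := free_seq_head_neq0 Hv.
move: (v0 :: v) (mem_head v0 v) Hv Hle => w Hv0 Hw Hle.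
have Hz : (rk (allpairs mul w z ++ w) <= rk (allpairs mul w (z ++ d) ++ w))%nat.
  apply: rk_le => x Hx; apply: lspan_mem; move: Hx.
  by rewrite !mem_cat mem_allpairs_catr mem_cat => /orP[] ->; rewrite ?orbT.
have Hdw : (size d <= rk (allpairs mul w (z ++ d) ++ w))%nat.
  have Hv0d : free_seq (map (mul v0) d).
    by apply: (free_seq_map (mulDr v0) (mulZr^~ v0)) => // x /Hnzd[/v0_neq0|].
  rewrite -(size_map (mul v0)) -(rk_free Hv0d).
  apply: rk_le => _ /mapP[b Hb ->]; apply: lspan_mem.
  by rewrite mem_cat allpairs_f // mem_cat Hb orbT.
exists w; split=> //; nia.
Qed.

Lemma amenable_of_unbounded g :
  (forall x, exists n, lspan (monomials mul g n) x) -> folner_condition ->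
  (forall k, exists2 d : seq A, free_seq d & size d = k) -> amenable mul.
Proof.
move=> Hg Hf Hfree.
pose P m u v := [/\ free_seq v, (2 * m.+1 * (size u).+1 <= size v)%nat &
  (m.+1 * rk (allpairs mul v (monomials mul g m) ++ v) <= m.+2 * size v)%nat].
pose F m u := epsilon (inhabits [::]) (P m u).
have HF m u : P m u (F m u) by apply: epsilon_spec; apply: folner_condition_large.
pose fix W m := if m is m'.+1 then let u := monomials mul g m' ++ W m' in F m' u ++ u else [::].
apply: (@amenable_of_rk_bounds W).
- move=> m; apply: lspan_subset => y Hy; apply: lspan_mem; by rewrite /= !mem_cat Hy !orbT.
- move=> x; have [n Hn] := Hg x; exists n.+1; apply: lspan_subset Hn => y Hy.
  by apply: lspan_mem; rewrite /= !mem_cat Hy !orbT.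
move=> r; have [N HN] := Hg r; exists N.+1 => -[//|m] Hm.
have [Hv Hsize Hle] := HF m (monomials mul g m ++ W m).
apply: folner_extension_bound Hv Hsize Hle.
exact: lspan_monomials_le HN.
Qed.

End Amenability.

(* Importing Reals rebound %R to R_scope; in the statement 0%R is the ring zero. *)
Delimit Scope ring_scope with R.

Theorem lemma1 (K : fieldType) (A : lmodType K) (mul : A -> A -> A) :
  affine_algebra mul -> no_zero_divisors mul -> ~ amenable mul ->
  exists Z : A -> Prop, fin_dim Z /\
  exists eps : R, Rlt R0 eps /\
    forall V : A -> Prop, fin_dim V -> (exists v, V v /\ v <> 0%R) ->
      Rlt (Rplus R1 eps) (dim_ratio (sum_space (prod_space mul V Z) V) V).
Proof.
move=> [[mulA mulDl mulDr mulZ] [g Hg]] Hnzd Hna; apply: NNPP => Hexpand; apply: Hna.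
have mulZl a x y := (mulZ a x y).1; have mulZr a x y := (mulZ a x y).2.
have Hfolner := folner_condition_of_not_expanding mulDl mulDr mulZl mulZr Hexpand.
have Hmonomials := lspan_monomials_exhaust mulDl mulDr mulZl mulZr mulA Hg.
have [Hfree|[d Hd]] := free_unbounded_or_spanning A.
  exact: amenable_of_unbounded Hmonomials Hfolner Hfree.
exact: amenable_of_spanning Hfolner Hd.
Qed.
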